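(* Let $\mathbf C$ be an admissible site and $\alpha$ an infinite cardinal. For a pro-covering morphism $f:V\to U$ and an object $W$ in $\mathrm{Pro}_\alpha\mathbf C$, the diagram \[{\rm Mor}(U,W)\to{\rm Mor}(V,W)\rightrightarrows{\rm Mor}(V\times_UV,W)\] is an equalizer of sets.
   Context: A coherent site is a small category with finite limits and a topology generated by finite coverings; a covering morphism is a morphism generating a covering sieve. $\mathbf C$ is admissible if its topology is subcanonical, finite coproducts $C=\coprod_iC_i$ exist with $\{C_i\to C\}$ a covering, there is a strict initial object, and finite coproducts are disjoint and stable under pullback. $\mathrm{Pro}_\alpha\mathbf C$ is the category whose objects are functors $F:I\to\mathbf C$ with $I$ a cofiltered category with at most $\alpha$ morphisms and ${\rm Mor}(F,G)=\lim_j\operatorname{colim}_i{\rm Mor}_{\mathbf C}(F(i),G(j))$. A morphism $f:V\to U$ in $\mathrm{Pro}_\alpha\mathbf C$ is a pro-covering morphism if it has a level representation $(V_i\to U_i)_{i\in I}$ by covering morphisms of $\mathbf C$. *)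

From Stdlib Require Vectors.Fin.
#[local] Set Warnings "-warn-library-file-stdlib-vector".

Set Implicit Arguments.
Unset Strict Implicit.

Record Category := {
  Obj :> Type;
  Hom : Obj -> Obj -> Type;
  idm : forall X, Hom X X;
  comp : forall X Y Z, Hom Y Z -> Hom X Y -> Hom X Z;
  comp_idl : forall X Y (f : Hom X Y), comp (idm Y) f = f;
  comp_idr : forall X Y (f : Hom X Y), comp f (idm X) = f;
  comp_assoc : forall X Y Z T (h : Hom Z T) (g : Hom Y Z) (f : Hom X Y),
      comp h (comp g f) = comp (comp h g) f }.

Arguments Hom {c} X Y.
Arguments idm {c} X.
Arguments comp {c X Y Z} g f.

Record Functor (I C : Category) := {
  fobj :> I -> C;
  fmap : forall i j : I, Hom i j -> Hom (fobj i) (fobj j);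
  fmap_id : forall i : I, fmap (idm i) = idm (fobj i);
  fmap_comp : forall (i j k : I) (u : Hom j k) (v : Hom i j),
      fmap (comp u v) = comp (fmap u) (fmap v) }.

Arguments fmap {I C} f {i j} u.

Definition injective (X Y : Type) (e : X -> Y) : Prop :=
  forall x y, e x = e y -> x = y.

Section Cat.
Variable C : Category.

Definition is_iso (X Y : C) (f : Hom X Y) : Prop :=
  exists g : Hom Y X, comp g f = idm X /\ comp f g = idm Y.

Definition is_terminal (T : C) : Prop :=
  forall X : C, exists f : Hom X T, forall g : Hom X T, g = f.

Definition is_initial (O : C) : Prop :=
  forall X : C, exists f : Hom O X, forall g : Hom O X, g = f.

Definition is_pullback (X Y Z : C) (f : Hom X Z) (g : Hom Y Z)
    (P : C) (p1 : Hom P X) (p2 : Hom P Y) : Prop :=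
  comp f p1 = comp g p2 /\
  forall (Q : C) (q1 : Hom Q X) (q2 : Hom Q Y), comp f q1 = comp g q2 ->
    exists m : Hom Q P, (comp p1 m = q1 /\ comp p2 m = q2) /\
      forall m' : Hom Q P, comp p1 m' = q1 -> comp p2 m' = q2 -> m' = m.

Definition has_finite_limits : Prop :=
  (exists T : C, is_terminal T) /\
  forall (X Y Z : C) (f : Hom X Z) (g : Hom Y Z),
    exists (P : C) (p1 : Hom P X) (p2 : Hom P Y), is_pullback f g p1 p2.

Definition is_coproduct (n : nat) (Xs : Fin.t n -> C) (Cp : C)
    (inj : forall i, Hom (Xs i) Cp) : Prop :=
  forall (Z : C) (h : forall i, Hom (Xs i) Z),
    exists m : Hom Cp Z, (forall i, comp m (inj i) = h i) /\
      forall m' : Hom Cp Z, (forall i, comp m' (inj i) = h i) -> m' = m.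
Arguments is_coproduct {n} Xs Cp inj.

Definition sieve (U : C) := forall X : C, Hom X U -> Prop.

Definition is_sieve (U : C) (S : sieve U) : Prop :=
  forall (X Y : C) (h : Hom X U) (g : Hom Y X), S X h -> S Y (comp h g).

Definition topology_data := forall U : C, sieve U -> Prop.

Definition pullback_sieve (U V : C) (g : Hom V U) (S : sieve U) : sieve V :=
  fun X h => S X (comp g h).

Definition is_topology (J : topology_data) : Prop :=
  (forall U S, J U S -> is_sieve S) /\
  (forall U, J U (fun _ _ => True)) /\
  (forall U V (g : Hom V U) (S : sieve U), J U S -> J V (pullback_sieve g S)) /\
  (forall U (S R : sieve U), J U S -> is_sieve R ->
     (forall V (h : Hom V U), S V h -> J V (pullback_sieve h R)) -> J U R).

Record FinFam (U : C) := {
  ff_n : nat;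
  ff_dom : Fin.t ff_n -> C;
  ff_map : forall i, Hom (ff_dom i) U }.
Arguments ff_n {U} f.
Arguments ff_dom {U} f i.
Arguments ff_map {U} f i.

Definition gen_sieve (U : C) (F : FinFam U) : sieve U :=
  fun X h => exists (i : Fin.t (ff_n F)) (g : Hom X (ff_dom F i)),
    h = comp (ff_map F i) g.

Definition sieve_of (V U : C) (f : Hom V U) : sieve U :=
  fun X h => exists g : Hom X V, h = comp f g.

Definition generated_by (J : topology_data) (Cov : forall U : C, FinFam U -> Prop)
  : Prop :=
  forall U (S : sieve U),
    J U S <-> (forall J' : topology_data, is_topology J' ->
                 (forall U' (F : FinFam U'), Cov U' F -> J' U' (gen_sieve F)) ->
                 J' U S).

Definition covering_morphism (J : topology_data) (V U : C) (f : Hom V U) : Prop :=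
  J U (sieve_of f).

Definition coherent_site (J : topology_data) : Prop :=
  has_finite_limits /\ is_topology J /\
  exists Cov : forall U : C, FinFam U -> Prop, generated_by J Cov.

Definition subcanonical (J : topology_data) : Prop :=
  forall (U : C) (S : sieve U), J U S ->
  forall (W : C) (x : forall (X : C) (h : Hom X U), S X h -> Hom X W),
    (forall (X Y : C) (h : Hom X U) (g : Hom Y X) (H : S X h) (H' : S Y (comp h g)),
        x Y (comp h g) H' = comp (x X h H) g) ->
    exists m : Hom U W, (forall X h (H : S X h), comp m h = x X h H) /\
      forall m' : Hom U W, (forall X h (H : S X h), comp m' h = x X h H) -> m' = m.

Definition admissible (J : topology_data) : Prop :=
  coherent_site J /\
  subcanonical J /\
  (forall (n : nat) (Xs : Fin.t n -> C),
     exists (Cp : C) (inj : forall i, Hom (Xs i) Cp), is_coproduct Xs Cp inj) /\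
  (forall (n : nat) (Xs : Fin.t n -> C) (Cp : C) (inj : forall i, Hom (Xs i) Cp),
     is_coproduct Xs Cp inj ->
     J Cp (gen_sieve (@Build_FinFam Cp n Xs inj))) /\
  (exists O : C, is_initial O /\ forall (X : C) (f : Hom X O), is_iso f) /\
  (forall (n : nat) (Xs : Fin.t n -> C) (Cp : C) (inj : forall i, Hom (Xs i) Cp),
     is_coproduct Xs Cp inj ->
     forall i j, i <> j ->
     forall (P : C) (p1 : Hom P (Xs i)) (p2 : Hom P (Xs j)),
       is_pullback (inj i) (inj j) p1 p2 -> is_initial P) /\
  (forall (n : nat) (Xs : Fin.t n -> C) (Cp : C) (inj : forall i, Hom (Xs i) Cp),
     is_coproduct Xs Cp inj ->
     forall (Y : C) (g : Hom Y Cp) (Ps : Fin.t n -> C)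
            (q : forall i, Hom (Ps i) Y) (r : forall i, Hom (Ps i) (Xs i)),
       (forall i, is_pullback g (inj i) (q i) (r i)) ->
       is_coproduct Ps Y q).

End Cat.

Definition cofiltered (I : Category) : Prop :=
  inhabited (Obj I) /\
  (forall i j : I, exists (k : I) (u : Hom k i) (v : Hom k j), True) /\
  (forall (i j : I) (u v : Hom i j), exists (k : I) (w : Hom k i), comp u w = comp v w).

(* the cardinal alpha is represented by a type A; "at most alpha morphisms" *)
Definition at_most_card (A : Type) (I : Category) : Prop :=
  exists e : {i : I & {j : I & Hom i j}} -> A, injective e.

Definition infinite_type (A : Type) : Prop :=
  exists e : nat -> A, injective e.

Record ProObj (C : Category) (A : Type) := {
  pidx : Category;
  pidx_cof : cofiltered pidx;
  pidx_small : at_most_card A pidx;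
  pdiag : Functor pidx C }.

Arguments pidx {C A} p.
Arguments pdiag {C A} p.

Section Pro.
Variables (C : Category) (A : Type).

(* elements of colim_i Mor_C(F(i), X) are represented by pairs (i, a) *)
Definition colim_elt (F : ProObj C A) (X : C) :=
  {i : pidx F & Hom (pdiag F i) X}.

(* the equivalence relation defining the (filtered) colimit *)
Definition colim_rel (F : ProObj C A) (X : C) (a b : colim_elt F X) : Prop :=
  exists (k : pidx F) (u : Hom k (projT1 a)) (v : Hom k (projT1 b)),
    comp (projT2 a) (fmap (pdiag F) u) = comp (projT2 b) (fmap (pdiag F) v).

(* raw family: one representative in colim_i Mor(F i, G j) for each j *)
Definition raw_mor (F G : ProObj C A) := forall j : pidx G, colim_elt F (pdiag G j).

(* elements of lim_j colim_i Mor(F i, G j): compatible raw families *)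
Record ProHom (F G : ProObj C A) := {
  ph : raw_mor F G;
  ph_compat : forall (j j' : pidx G) (t : Hom j j'),
      colim_rel (existT _ (projT1 (ph j)) (comp (fmap (pdiag G) t) (projT2 (ph j))))
                (ph j') }.

Arguments ph {F G} p j.

Definition raw_eq (F G : ProObj C A) (r s : raw_mor F G) : Prop :=
  forall j, colim_rel (r j) (s j).

Definition pro_eq (F G : ProObj C A) (f g : ProHom F G) : Prop :=
  raw_eq (ph f) (ph g).

Definition rcomp (F G H : ProObj C A) (g : raw_mor G H) (f : raw_mor F G)
  : raw_mor F H :=
  fun k => existT _ (projT1 (f (projT1 (g k))))
                    (comp (projT2 (g k)) (projT2 (f (projT1 (g k))))).

Definition raw_id (F : ProObj C A) : raw_mor F F :=
  fun j => existT _ j (idm (pdiag F j)).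
Arguments raw_id F : clear implicits.

Definition pro_iso (F G : ProObj C A) (f : ProHom F G) : Prop :=
  exists g : ProHom G F,
    raw_eq (rcomp (ph g) (ph f)) (raw_id F) /\
    raw_eq (rcomp (ph f) (ph g)) (raw_id G).

Definition is_pro_pullback (X Y Z : ProObj C A) (f : ProHom X Z) (g : ProHom Y Z)
    (P : ProObj C A) (p1 : ProHom P X) (p2 : ProHom P Y) : Prop :=
  raw_eq (rcomp (ph f) (ph p1)) (rcomp (ph g) (ph p2)) /\
  forall (Q : ProObj C A) (q1 : ProHom Q X) (q2 : ProHom Q Y),
    raw_eq (rcomp (ph f) (ph q1)) (rcomp (ph g) (ph q2)) ->
    exists m : ProHom Q P,
      (raw_eq (rcomp (ph p1) (ph m)) (ph q1) /\ raw_eq (rcomp (ph p2) (ph m)) (ph q2)) /\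
      forall m' : ProHom Q P,
        raw_eq (rcomp (ph p1) (ph m')) (ph q1) ->
        raw_eq (rcomp (ph p2) (ph m')) (ph q2) -> pro_eq m' m.

Definition level_obj (I : Category) (HI : cofiltered I) (HA : at_most_card A I)
    (X : Functor I C) : ProObj C A :=
  {| pidx := I; pidx_cof := HI; pidx_small := HA; pdiag := X |}.

Definition level_raw (I : Category) (HI : cofiltered I) (HA : at_most_card A I)
    (X Y : Functor I C) (phi : forall i : I, Hom (X i) (Y i))
  : raw_mor (level_obj HI HA X) (level_obj HI HA Y) :=
  fun i => existT _ i (phi i).

Definition natural (I : Category) (X Y : Functor I C)
    (phi : forall i : I, Hom (X i) (Y i)) : Prop :=
  forall (i j : I) (u : Hom i j), comp (fmap Y u) (phi i) = comp (phi j) (fmap X u).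

(* f : V -> U is a pro-covering morphism: it has a level representation
   (V_i -> U_i)_{i in I} by covering morphisms, i.e. f is isomorphic, in the
   arrow category of Pro_alpha C, to the morphism induced by a natural
   transformation between I-diagrams whose components are covering morphisms *)
Definition pro_covering (J : topology_data C) (V U : ProObj C A) (f : ProHom V U)
  : Prop :=
  exists (I : Category) (HI : cofiltered I) (HA : at_most_card A I)
         (X Y : Functor I C) (phi : forall i : I, Hom (X i) (Y i)),
    natural phi /\
    (forall i, covering_morphism J (phi i)) /\
    exists (iV : ProHom V (level_obj HI HA X)) (iU : ProHom U (level_obj HI HA Y)),
      pro_iso iV /\ pro_iso iU /\
      raw_eq (rcomp (ph iU) (ph f)) (rcomp (@level_raw I HI HA X Y phi) (ph iV)).

End Pro.

Arguments ph {C A F G} p j.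

(* A pro-covering morphism is, up to isomorphism of arrows, a level map
   Phi = (phi_i : X_i -> Y_i) of covering morphisms, so it suffices to show
   that Phi is an epimorphism admitting descent along its levelwise kernel
   pair X x_Y X, and that both properties pass along isomorphisms of arrows
   (descent along the pro-pullback V x_U V, since the levelwise kernel pair maps
   into it).  As the topology is subcanonical, every covering morphism of C is
   an effective epimorphism, and cofilteredness lets us check both properties
   of Phi one representative at a time: a relation between representatives in
   colim_i Mor(Y_i, Z) is witnessed at a single level, and a map out of X
   equalized by the kernel pair is, after refining the index, equalized by the
   kernel pair of a single phi_k. *)

From Stdlib Require Import Setoid Morphisms IndefiniteDescription.

Set Implicit Arguments.
Unset Strict Implicit.

Section ProCategory.
Variables (C : Category) (A : Type).
Notation PO := (ProObj C A).

Lemma comp_fmap_comp (I : Category) (F : Functor I C) (i j k : I)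
    (u : Hom j k) (v : Hom i j) (Z : C) (a : Hom (F k) Z) :
  comp a (fmap F (comp u v)) = comp (comp a (fmap F u)) (fmap F v).
Proof. rewrite fmap_comp, comp_assoc. reflexivity. Qed.

Lemma colim_rel_refl (F : PO) (X : C) (a : colim_elt F X) : colim_rel a a.
Proof. exists (projT1 a), (idm _), (idm _). reflexivity. Qed.

Lemma colim_rel_sym (F : PO) (X : C) (a b : colim_elt F X) :
  colim_rel a b -> colim_rel b a.
Proof. intros (k & u & v & H). exists k, v, u. symmetry; exact H. Qed.

(* Cofilteredness: first a common refinement of the two witnesses, then an
   equalizer of the two resulting arrows into the middle index. *)
Lemma colim_rel_trans (F : PO) (X : C) (a b c : colim_elt F X) :
  colim_rel a b -> colim_rel b c -> colim_rel a c.
Proof.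
  intros (k & u & v & H) (k' & u' & v' & H').
  destruct (pidx_cof F) as [_ [Hspan Heq]].
  destruct (Hspan k k') as (m & w & w' & _).
  destruct (Heq _ _ (comp v w) (comp u' w')) as (n & e & He).
  exists n, (comp u (comp w e)), (comp v' (comp w' e)).
  rewrite comp_fmap_comp, H, <- comp_fmap_comp, (comp_assoc v w e), He,
    <- comp_assoc, comp_fmap_comp, H', <- comp_fmap_comp.
  reflexivity.
Qed.

Global Instance colim_rel_Equivalence (F : PO) (X : C) :
  Equivalence (@colim_rel C A F X).
Proof. split; red; eauto using colim_rel_refl, colim_rel_sym, colim_rel_trans. Qed.

Definition post (F : PO) (X Y : C) (z : Hom X Y) (a : colim_elt F X) : colim_elt F Y :=
  existT _ (projT1 a) (comp z (projT2 a)).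

Global Instance post_Proper (F : PO) (X Y : C) (z : Hom X Y) :
  Proper (@colim_rel C A F X ==> @colim_rel C A F Y) (post z).
Proof.
  intros a b (k & u & v & H). exists k, u, v. simpl.
  rewrite <- !comp_assoc, H. reflexivity.
Qed.

Lemma post_post (F : PO) (X Y Z : C) (z : Hom Y Z) (z' : Hom X Y) (a : colim_elt F X) :
  post z (post z' a) = post (comp z z') a.
Proof. destruct a. unfold post; simpl. rewrite comp_assoc. reflexivity. Qed.

Definition compat (F G : PO) (r : raw_mor F G) : Prop :=
  forall (j j' : pidx G) (t : Hom j j'), colim_rel (post (fmap (pdiag G) t) (r j)) (r j').

Lemma ph_compat_post (F G : PO) (g : ProHom F G) : compat (ph g).
Proof. intros j j' t. exact (ph_compat g t). Qed.

(* Precomposition with a raw morphism [F -> G], as a map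
   colim_i Mor(G i, X) -> colim_i Mor(F i, X). *)
Definition push (F G : PO) (X : C) (r : raw_mor F G) (b : colim_elt G X) : colim_elt F X :=
  post (projT2 b) (r (projT1 b)).

Lemma push_congr (F G : PO) (X : C) (r : raw_mor F G) (b b' : colim_elt G X) :
  compat r -> colim_rel b b' -> colim_rel (push r b) (push r b').
Proof.
  intros Hr (k & u & v & H). destruct b as [j b], b' as [j' b']. simpl in *.
  unfold push; simpl.
  rewrite <- (Hr _ _ u), post_post, H, <- post_post, (Hr _ _ v).
  reflexivity.
Qed.

Lemma push_post (F G : PO) (X Y : C) (r : raw_mor F G) (z : Hom X Y) (b : colim_elt G X) :
  push r (post z b) = post z (push r b).
Proof. destruct b. unfold push, post; simpl. rewrite comp_assoc. reflexivity. Qed.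

Lemma rcomp_push (F G H : PO) (g : raw_mor G H) (f : raw_mor F G) k :
  rcomp g f k = push f (g k).
Proof. reflexivity. Qed.

Lemma rcomp_compat (F G H : PO) (g : raw_mor G H) (f : raw_mor F G) :
  compat g -> compat f -> compat (rcomp g f).
Proof.
  intros Hg Hf k k' t. rewrite !rcomp_push, <- push_post.
  apply push_congr; auto.
Qed.

Definition pcomp (F G H : PO) (g : ProHom G H) (f : ProHom F G) : ProHom F H :=
  Build_ProHom (rcomp_compat (ph_compat_post g) (ph_compat_post f)).

Lemma raw_id_compat (F : PO) : compat (@raw_id C A F).
Proof.
  intros j j' t. exists j, (idm _), t. simpl.
  rewrite fmap_id, !comp_idr, comp_idl. reflexivity.
Qed.

Definition pid (F : PO) : ProHom F F := @Build_ProHom C A F F _ (@raw_id_compat F).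

Global Instance pro_eq_Equivalence (F G : PO) : Equivalence (@pro_eq C A F G).
Proof.
  split.
  - intros f j. reflexivity.
  - intros f g H j. symmetry. apply H.
  - intros f g h H H' j. transitivity (ph g j); [apply H | apply H'].
Qed.

Global Instance pcomp_Proper (F G H : PO) :
  Proper (@pro_eq C A G H ==> @pro_eq C A F G ==> @pro_eq C A F H) (@pcomp F G H).
Proof.
  intros g g' Hg f f' Hf k. simpl. rewrite !rcomp_push.
  rewrite (push_congr (ph_compat_post f) (Hg k)).
  destruct (ph g' k) as [j z]. unfold push; simpl. rewrite (Hf j). reflexivity.
Qed.

Lemma pcomp_assoc (F G H K : PO) (h : ProHom H K) (g : ProHom G H) (f : ProHom F G) :
  pro_eq (pcomp (pcomp h g) f) (pcomp h (pcomp g f)).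
Proof. intro k. unfold pcomp, rcomp; simpl. rewrite comp_assoc. reflexivity. Qed.

Lemma pcomp_idl (F G : PO) (f : ProHom F G) : pro_eq (pcomp (pid G) f) f.
Proof.
  intro k. simpl. unfold rcomp, raw_id; simpl.
  rewrite comp_idl. destruct (ph f k); reflexivity.
Qed.

Lemma pcomp_idr (F G : PO) (f : ProHom F G) : pro_eq (pcomp f (pid F)) f.
Proof.
  intro k. simpl. unfold rcomp, raw_id; simpl.
  rewrite comp_idr. destruct (ph f k); reflexivity.
Qed.

End ProCategory.
Section ProEpiDescent.
Variables (C : Category) (A : Type).
Notation PO := (ProObj C A).

Definition pro_epi (V U : PO) (f : ProHom V U) : Prop :=
  forall (W : PO) (g g' : ProHom U W), pro_eq (pcomp g f) (pcomp g' f) -> pro_eq g g'.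

Definition pro_descent (K V U : PO) (f : ProHom V U) (q1 q2 : ProHom K V) : Prop :=
  forall (W : PO) (g : ProHom V W),
    pro_eq (pcomp g q1) (pcomp g q2) -> exists h : ProHom U W, pro_eq (pcomp h f) g.

Variables (V U X Y : PO) (f : ProHom V U) (e : ProHom X Y).
Variables (iV : ProHom V X) (jV : ProHom X V) (iU : ProHom U Y) (jU : ProHom Y U).
Hypothesis square : pro_eq (pcomp iU f) (pcomp e iV).
Hypothesis jViV : pro_eq (pcomp jV iV) (pid V).
Hypothesis iVjV : pro_eq (pcomp iV jV) (pid X).
Hypothesis jUiU : pro_eq (pcomp jU iU) (pid U).

Lemma square_inverse : pro_eq (pcomp f jV) (pcomp jU e).
Proof.
  rewrite <- (pcomp_idl (pcomp f jV)), <- jUiU, !pcomp_assoc,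
    <- (pcomp_assoc iU f jV), square, pcomp_assoc, iVjV, pcomp_idr.
  reflexivity.
Qed.

Lemma pro_epi_square : pro_epi e -> pro_epi f.
Proof.
  intros He W h h' Hh.
  assert (HjU : pro_eq (pcomp h jU) (pcomp h' jU)).
  { apply He. rewrite !pcomp_assoc, <- square_inverse, <- !pcomp_assoc, Hh.
    reflexivity. }
  rewrite <- (pcomp_idr h), <- (pcomp_idr h'), <- jUiU, <- !pcomp_assoc, HjU.
  reflexivity.
Qed.

(* A pair [q1, q2] equalized by [e] maps into the kernel pair of [f]; so
   descent along [e] yields descent along [f]. *)
Lemma pro_descent_square (K P : PO) (q1 q2 : ProHom K X) (p1 p2 : ProHom P V) :
  pro_eq (pcomp e q1) (pcomp e q2) -> is_pro_pullback f f p1 p2 ->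
  pro_descent e q1 q2 -> pro_descent f p1 p2.
Proof.
  intros Hq [_ Hpb] He W g Hg.
  destruct (Hpb _ (pcomp jV q1) (pcomp jV q2)) as (m & [Hm1 Hm2] & _).
  { change (pro_eq (pcomp f (pcomp jV q1)) (pcomp f (pcomp jV q2))).
    rewrite <- !pcomp_assoc, square_inverse, !pcomp_assoc, Hq. reflexivity. }
  change (pro_eq (pcomp p1 m) (pcomp jV q1)) in Hm1.
  change (pro_eq (pcomp p2 m) (pcomp jV q2)) in Hm2.
  destruct (He W (pcomp g jV)) as [h Hh].
  { change (pro_eq (pcomp g p1) (pcomp g p2)) in Hg.
    rewrite !pcomp_assoc, <- Hm1, <- Hm2, <- !pcomp_assoc, Hg. reflexivity. }
  exists (pcomp h iU).
  rewrite pcomp_assoc, square, <- pcomp_assoc, Hh, pcomp_assoc, jViV, pcomp_idr.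
  reflexivity.
Qed.

End ProEpiDescent.

Section SubcanonicalSite.
Variables (C : Category) (J : topology_data C).
Hypothesis Hsub : subcanonical J.

Lemma covering_morphism_epi (V U W : C) (phi : Hom V U) (c c' : Hom U W) :
  covering_morphism J phi -> comp c phi = comp c' phi -> c = c'.
Proof.
  intros Hcov Heq.
  destruct (Hsub Hcov (W:=W) (x := fun X h _ => comp c h)) as (m & _ & Hm).
  { intros. apply comp_assoc. }
  transitivity m.
  - apply Hm. reflexivity.
  - symmetry. apply Hm. intros X h [g ->]. rewrite !comp_assoc, Heq. reflexivity.
Qed.

Lemma pullback_coequalized (X Z P : C) (phi : Hom X Z) (p1 p2 : Hom P X) (W : C)
    (b : Hom X W) :
  is_pullback phi phi p1 p2 -> comp b p1 = comp b p2 ->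
  forall (Q : C) (g g' : Hom Q X), comp phi g = comp phi g' -> comp b g = comp b g'.
Proof.
  intros [_ Hu] Hb Q g g' E.
  destruct (Hu Q g g' E) as (m & [<- <-] & _).
  rewrite !comp_assoc, Hb. reflexivity.
Qed.

(* Subcanonicity glues the local values [b o g] on the sieve generated by
   [phi]; they are well defined because [b] coequalizes the kernel pair. *)
Lemma covering_morphism_descent (V U P W : C) (phi : Hom V U) (p1 p2 : Hom P V)
    (b : Hom V W) :
  covering_morphism J phi -> is_pullback phi phi p1 p2 -> comp b p1 = comp b p2 ->
  exists c : Hom U W, comp c phi = b.
Proof.
  intros Hcov Hpb Hb.
  pose (x := fun (X : C) (h : Hom X U) (H : sieve_of phi h) =>
          comp b (proj1_sig (constructive_indefinite_description _ H))).
  destruct (Hsub Hcov (W:=W) (x := x)) as (m & Hm & _).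
  { intros X Y h g H H'. unfold x.
    destruct (constructive_indefinite_description _ H) as [g1 E1].
    destruct (constructive_indefinite_description _ H') as [g2 E2]. simpl.
    rewrite <- comp_assoc. apply (pullback_coequalized Hpb Hb).
    rewrite <- E2, E1, comp_assoc. reflexivity. }
  exists m.
  assert (Hphi : sieve_of phi phi) by (exists (idm V); symmetry; apply comp_idr).
  rewrite (Hm _ _ Hphi). unfold x.
  destruct (constructive_indefinite_description _ Hphi) as [g0 E0]. simpl.
  rewrite <- (comp_idr b) at 2. apply (pullback_coequalized Hpb Hb).
  rewrite <- E0, comp_idr. reflexivity.
Qed.

End SubcanonicalSite.

Lemma pullback_hom_ext (C : Category) (X Y Z : C) (f : Hom X Z) (g : Hom Y Z)
    (P : C) (p1 : Hom P X) (p2 : Hom P Y) :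
  is_pullback f g p1 p2 -> forall (Q : C) (m m' : Hom Q P),
  comp p1 m = comp p1 m' -> comp p2 m = comp p2 m' -> m = m'.
Proof.
  intros [Hsq Hu] Q m m' E1 E2.
  assert (E : comp f (comp p1 m) = comp g (comp p2 m))
    by (rewrite !comp_assoc, Hsq; reflexivity).
  destruct (Hu Q _ _ E) as (m0 & _ & Hm0).
  transitivity m0; [apply Hm0; reflexivity | symmetry; apply Hm0; auto].
Qed.

Section LevelMorphisms.
Variables (C : Category) (A : Type) (I : Category).
Variables (HI : cofiltered I) (HA : at_most_card A I).
Notation level := (level_obj (A:=A) HI HA).

Lemma level_raw_compat (X Y : Functor I C) (phi : forall i : I, Hom (X i) (Y i)) :
  natural phi -> compat (@level_raw C A I HI HA X Y phi).
Proof.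
  intros Hn j j' t. exists j, (idm _), t. simpl.
  rewrite fmap_id, comp_idr, Hn. reflexivity.
Qed.

Definition level_hom (X Y : Functor I C) (phi : forall i : I, Hom (X i) (Y i))
    (Hn : natural phi) : ProHom (level X) (level Y) :=
  Build_ProHom (level_raw_compat Hn).

Variables (J : topology_data C) (X Y : Functor I C) (phi : forall i : I, Hom (X i) (Y i)).
Hypothesis Hsub : subcanonical J.
Hypothesis Hnat : natural phi.
Hypothesis Hcov : forall i, covering_morphism J (phi i).

Lemma level_push_cancel (Z : C) (b b' : colim_elt (level Y) Z) :
  colim_rel (push (ph (level_hom Hnat)) b) (push (ph (level_hom Hnat)) b') ->
  colim_rel b b'.
Proof.
  destruct b as [i c], b' as [i' c']. unfold push, post; simpl.
  intros (k & u & v & H). simpl in *. exists k, u, v. simpl.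
  apply (covering_morphism_epi Hsub (Hcov k)).
  rewrite <- !comp_assoc, !Hnat, !comp_assoc. exact H.
Qed.

Lemma level_pro_epi : pro_epi (level_hom Hnat).
Proof. intros W g g' H j. apply level_push_cancel, H. Qed.

Hypothesis Hfl : has_finite_limits C.

Lemma kernel_pair_data (i : I) : {P : C & {p1 : Hom P (X i) & {p2 : Hom P (X i) |
   is_pullback (phi i) (phi i) p1 p2}}}.
Proof.
  destruct (constructive_indefinite_description _ (proj2 Hfl _ _ _ (phi i) (phi i)))
    as [P HP].
  destruct (constructive_indefinite_description _ HP) as [p1 HP1].
  destruct (constructive_indefinite_description _ HP1) as [p2 HP2].
  exact (existT _ P (existT _ p1 (exist _ p2 HP2))).
Qed.

Definition kp_obj (i : I) : C := projT1 (kernel_pair_data i).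
Definition kp1 (i : I) : Hom (kp_obj i) (X i) := projT1 (projT2 (kernel_pair_data i)).
Definition kp2 (i : I) : Hom (kp_obj i) (X i) :=
  proj1_sig (projT2 (projT2 (kernel_pair_data i))).

Lemma kp_pullback (i : I) : is_pullback (phi i) (phi i) (kp1 i) (kp2 i).
Proof. exact (proj2_sig (projT2 (projT2 (kernel_pair_data i)))). Qed.

Lemma kp_map_data (i j : I) (u : Hom i j) : {m : Hom (kp_obj i) (kp_obj j) |
   comp (kp1 j) m = comp (fmap X u) (kp1 i) /\ comp (kp2 j) m = comp (fmap X u) (kp2 i)}.
Proof.
  apply constructive_indefinite_description.
  destruct (kp_pullback j) as [_ Hu].
  destruct (Hu _ (comp (fmap X u) (kp1 i)) (comp (fmap X u) (kp2 i))) as (m & Hm & _).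
  - rewrite !comp_assoc, <- Hnat, <- !comp_assoc, (proj1 (kp_pullback i)).
    reflexivity.
  - exists m. exact Hm.
Qed.

Definition kp_map (i j : I) (u : Hom i j) := proj1_sig (kp_map_data u).

Lemma kp1_map (i j : I) (u : Hom i j) : comp (kp1 j) (kp_map u) = comp (fmap X u) (kp1 i).
Proof. exact (proj1 (proj2_sig (kp_map_data u))). Qed.

Lemma kp2_map (i j : I) (u : Hom i j) : comp (kp2 j) (kp_map u) = comp (fmap X u) (kp2 i).
Proof. exact (proj2 (proj2_sig (kp_map_data u))). Qed.

Lemma kp_map_id (i : I) : kp_map (idm i) = idm (kp_obj i).
Proof.
  apply (pullback_hom_ext (kp_pullback i));
    rewrite ?kp1_map, ?kp2_map, fmap_id, comp_idl, comp_idr; reflexivity.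
Qed.

Lemma kp_map_comp (i j k : I) (u : Hom j k) (v : Hom i j) :
  kp_map (comp u v) = comp (kp_map u) (kp_map v).
Proof.
  apply (pullback_hom_ext (kp_pullback k)).
  - rewrite kp1_map, comp_assoc, kp1_map, <- comp_assoc, kp1_map, comp_assoc, fmap_comp.
    reflexivity.
  - rewrite kp2_map, comp_assoc, kp2_map, <- comp_assoc, kp2_map, comp_assoc, fmap_comp.
    reflexivity.
Qed.

Definition kernel_pair_functor : Functor I C := Build_Functor kp_map_id kp_map_comp.

Lemma kp1_natural : natural (X:=kernel_pair_functor) (Y:=X) kp1.
Proof. intros i j u. symmetry. apply kp1_map. Qed.

Lemma kp2_natural : natural (X:=kernel_pair_functor) (Y:=X) kp2.
Proof. intros i j u. symmetry. apply kp2_map. Qed.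

Lemma level_kernel_pair_sq :
  pro_eq (pcomp (level_hom Hnat) (level_hom kp1_natural))
         (pcomp (level_hom Hnat) (level_hom kp2_natural)).
Proof.
  intro i. unfold pcomp, rcomp; simpl. rewrite (proj1 (kp_pullback i)). reflexivity.
Qed.

(* The two representatives of [G] over index [j] agree after some [u, v : k -> i];
   refining along an equalizer [w] of [u] and [v] makes them agree on the kernel
   pair at level [k'], so they factor through [phi k']. *)
Lemma level_descent_component (W : ProObj C A) (G : ProHom (level X) W) :
  pro_eq (pcomp G (level_hom kp1_natural)) (pcomp G (level_hom kp2_natural)) ->
  forall j, exists b : colim_elt (level Y) (pdiag W j),
    colim_rel (push (ph (level_hom Hnat)) b) (ph G j).
Proof.
  intros HG j. specialize (HG j). simpl in HG. unfold rcomp in HG; simpl in HG.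
  destruct (ph G j) as [i a]. simpl in HG.
  destruct HG as (k & u & v & Heq). simpl in u, v, Heq.
  destruct (proj2 (proj2 HI) _ _ u v) as (k' & w & Hw).
  assert (Hb : comp (comp a (fmap X (comp u w))) (kp1 k') =
               comp (comp a (fmap X (comp u w))) (kp2 k')).
  { rewrite <- !comp_assoc, <- kp1_map, kp_map_comp, comp_assoc, comp_assoc, Heq.
    change (comp u w = comp v w) in Hw.
    rewrite Hw, <- !comp_assoc, <- kp2_map, kp_map_comp. reflexivity. }
  destruct (covering_morphism_descent Hsub (Hcov k') (kp_pullback k') Hb) as [c Hc].
  exists (existT _ k' c). unfold push, post; simpl. rewrite Hc.
  exists k', (idm _), (comp u w). simpl. rewrite fmap_id, comp_idr. reflexivity.
Qed.

Lemma level_descent :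
  pro_descent (level_hom Hnat) (level_hom kp1_natural) (level_hom kp2_natural).
Proof.
  intros W G HG.
  pose (h := fun j => proj1_sig
    (constructive_indefinite_description _ (level_descent_component HG j))).
  assert (Hh : forall j, colim_rel (push (ph (level_hom Hnat)) (h j)) (ph G j)).
  { intro j. exact (proj2_sig
      (constructive_indefinite_description _ (level_descent_component HG j))). }
  assert (Hcompat : compat (F:=level Y) (G:=W) h).
  { intros j j' t. apply level_push_cancel.
    rewrite push_post, Hh, (ph_compat_post G t), Hh. reflexivity. }
  exists (Build_ProHom Hcompat). intro j. apply Hh.
Qed.

End LevelMorphisms.

Unset Implicit Arguments.

Theorem lemma6p4 (C : Category) (J : topology_data C) (A : Type)
    (HC : admissible J) (Halpha : infinite_type A)
    (V U W : ProObj C A) (f : ProHom V U) (Hf : pro_covering J f)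
    (P : ProObj C A) (p1 p2 : ProHom P V) (HP : is_pro_pullback f f p1 p2) :
  (* the two composites Mor(U,W) -> Mor(VxV,W) agree *)
  (forall h : ProHom U W,
     raw_eq (rcomp (rcomp (ph h) (ph f)) (ph p1))
            (rcomp (rcomp (ph h) (ph f)) (ph p2))) /\
  (* Mor(U,W) -> Mor(V,W) is injective *)
  (forall h h' : ProHom U W,
     raw_eq (rcomp (ph h) (ph f)) (rcomp (ph h') (ph f)) -> pro_eq h h') /\
  (* its image is the equalizer of the two maps Mor(V,W) => Mor(VxV,W) *)
  (forall g : ProHom V W,
     raw_eq (rcomp (ph g) (ph p1)) (rcomp (ph g) (ph p2)) ->
     exists h : ProHom U W, raw_eq (rcomp (ph h) (ph f)) (ph g)).
Proof.
  destruct HC as [[Hfl _] [Hsub _]].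
  destruct Hf as (I & HI & HA & X & Y & phi & Hnat & Hcov & iV & iU &
                  [jV [HjViV HiVjV]] & [jU [HjUiU _]] & Hsq).
  change (pro_eq (pcomp iU f) (pcomp (level_hom HI HA Hnat) iV)) in Hsq.
  assert (Hpb : pro_eq (pcomp f p1) (pcomp f p2)) by exact (proj1 HP).
  split; [|split].
  - intro h. change (pro_eq (pcomp (pcomp h f) p1) (pcomp (pcomp h f) p2)).
    rewrite !pcomp_assoc, Hpb. reflexivity.
  - apply (pro_epi_square Hsq HiVjV HjUiU).
    exact (level_pro_epi Hsub Hcov).
  - apply (pro_descent_square Hsq HjViV HiVjV HjUiU
             (level_kernel_pair_sq Hnat Hfl) HP).
    exact (level_descent (Hfl:=Hfl) Hsub Hcov).
Qed.
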